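(* Let $k\ge 1$ and $n\ge 3$ be integers, let $\alpha<0$ be a real number, and let $G\in T_k(n)$. Then \[{}^0R_{\alpha}(G)\ge k(n-1)^{\alpha}+2(k+1)^{\alpha}+(n-k-2)(k+2)^{\alpha},\] and equality holds if and only if $G=K_k+P_{n-k}$.
   Context: All graphs are finite, simple, undirected and connected. For a graph $G$ and real $\alpha\neq 0$, the zeroth-order general Randić index is ${}^0R_{\alpha}(G)=\sum_{v\in V(G)}d(v)^{\alpha}$, where $d(v)$ is the degree of $v$. A connected graph $G$ is a $k$-generalized quasi tree if there is a subset $V_k\subset V(G)$ with $|V_k|=k$ such that $G-V_k$ is a tree, but for every subset $V_{k-1}\subset V(G)$ with $|V_{k-1}|=k-1$, $G-V_{k-1}$ is not a tree; the vertices of such a $V_k$ are called quasi vertices. $T_k(n)$ denotes the class of $k$-generalized quasi trees of order $n$. For vertex-disjoint graphs $G,H$, the join $G+H$ has vertex set $V(G)\cup V(H)$ and edge set $E(G)\cup E(H)\cup\{uv: u\in V(G), v\in V(H)\}$. $K_k$ is the complete graph on $k$ vertices and $P_m$ is the path on $m$ vertices. *)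

From HB Require Import structures.
From mathcomp Require Import all_boot all_order all_algebra.
From mathcomp Require Import all_classical all_reals all_analysis.
Set Implicit Arguments. Unset Strict Implicit. Unset Printing Implicit Defensive.
Import Order.TTheory GRing.Theory Num.Theory.

Definition simple_graph (T : finType) (e : rel T) : Prop :=
  symmetric e /\ irreflexive e.

Definition connected_graph (T : finType) (e : rel T) : Prop :=
  forall x y : T, connect e x y.

Definition deg (T : finType) (e : rel T) (v : T) : nat := #|[pred y | e v y]|.

Definition randic0 (R : realType) (T : finType) (e : rel T) (alpha : R) : R :=
  (\sum_(v : T) ((deg e v)%:R `^ alpha))%R.

Definition induced (T : finType) (e : rel T) (S : {set T}) : rel T :=
  [rel x y | [&& x \in S, y \in S & e x y]].

Definition has_cycle (T : finType) (e : rel T) (S : {set T}) : Prop :=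
  exists s : seq T, [/\ all (mem S) s, uniq s, 2 < size s & cycle e s].

Definition is_tree_on (T : finType) (e : rel T) (S : {set T}) : Prop :=
  [/\ (0 < #|S|)%N,
      (forall x y, x \in S -> y \in S -> connect (induced e S) x y)
    & ~ has_cycle e S].

Definition tree_after_removal (T : finType) (e : rel T) (V : {set T}) : Prop :=
  is_tree_on e (~: V).

Definition gen_quasi_tree (T : finType) (e : rel T) (k : nat) : Prop :=
  connected_graph e /\
  (exists V : {set T}, #|V| = k /\ tree_after_removal e V) /\
  (forall W : {set T}, #|W| = k.-1 -> ~ tree_after_removal e W).

Definition complete_graph (k : nat) : rel 'I_k := fun i j => i != j.
Definition path_graph (m : nat) : rel 'I_m :=
  fun i j => (i.+1 == j :> nat) || (j.+1 == i :> nat).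

Definition graph_join (T1 T2 : finType) (e1 : rel T1) (e2 : rel T2) :
    rel (T1 + T2)%type :=
  fun u v => match u, v with
             | inl a, inl b => e1 a b
             | inr a, inr b => e2 a b
             | _, _ => true
             end.

Definition isomorphic (T1 T2 : finType) (e1 : rel T1) (e2 : rel T2) : Prop :=
  exists f : T1 -> T2, bijective f /\ forall x y, e1 x y = e2 (f x) (f y).
Arguments complete_graph : clear implicits.
Arguments path_graph : clear implicits.

From Pilot Require Import Defs.
From HB Require Import structures.
From mathcomp Require Import all_boot all_order all_algebra.
From mathcomp Require Import all_classical all_reals all_analysis.
Import Order.TTheory GRing.Theory Num.Theory.
From mathcomp Require Import ring lra zify.

(* Let V be a set of k quasi vertices, so that the remaining m = n - k vertices
   induce a tree; minimality of k forces m >= 2.  A quasi vertex has degree at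
   most n - 1 and contributes at least (n - 1)^alpha.  A tree vertex v has degree
   at most k + d v, where d v is its degree inside the tree; since
   d |-> (k + d)^alpha is strictly convex it lies above its secant through
   d = 1, 2, with equality only there, and summing these secant bounds with
   sum d v <= 2 (m - 1) yields 2 (k + 1)^alpha + (m - 2) (k + 2)^alpha.
   Equality forces every quasi vertex to be adjacent to all other vertices and
   the tree to have maximum degree 2, i.e. to be a path: G = K_k + P_(n-k). *)

Section ConvexSequence.
Local Open Scope ring_scope.
Context {R : realFieldType} {u : nat -> R}.
Hypothesis u_convex : forall j, 2 * u j.+1 < u j + u j.+2.

Lemma convex_increment_lt i j : (i < j)%N -> u i.+1 - u i < u j.+1 - u j.
Proof.
elim: j => // j IH; rewrite ltnS leq_eqVlt => /orP[/eqP->|/IH];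
  have := u_convex j; lra.
Qed.

Lemma convex_secant_leif d :
  u 1 + (d%:R - 1) * (u 2 - u 1) <= u d ?= iff ((d == 1) || (d == 2))%N.
Proof.
have above_secant m : u 2 + m.+1%:R * (u 2 - u 1) < u m.+3.
  elim: m => [|m IH]; first by have := u_convex 1; lra.
  have := @convex_increment_lt 1 m.+3 isT; rewrite mulrS; lra.
apply/leifP; case: d => [|[|[|d]]] /=; first by have := u_convex 0; lra.
- by rewrite subrr mul0r addr0.
- by apply/eqP; rewrite mulrS; ring.
- by have := above_secant d; rewrite !mulrS; lra.
Qed.

End ConvexSequence.

Section NegativePower.
Local Open Scope ring_scope.
Context {R : realType} {alpha : R}.
Hypothesis alpha_lt0 : alpha < 0.

Lemma powR_lt_neg (x y : R) : 0 < x -> x < y -> y `^ alpha < x `^ alpha.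
Proof.
move=> x_gt0 xy; have y_gt0 := lt_trans x_gt0 xy.
have nalpha_gt0 : 0 < - alpha by rewrite oppr_gt0.
rewrite -(opprK alpha) (powRN x) (powRN y) ltf_pV2 ?posrE ?powR_gt0 //.
exact: (gt0_ltr_powR nalpha_gt0 (ltW x_gt0) (ltW y_gt0) xy).
Qed.

Local Notation w d := ((d : nat)%:R `^ alpha).

Lemma natpowR_leif a b : (0 < a)%N -> (a <= b)%N -> w b <= w a ?= iff (a == b).
Proof.
move=> a_gt0; rewrite leq_eqVlt => /orP[/eqP->|ab]; first exact/leif_refl.
apply/leifP; rewrite ltn_eqF //.
by apply: powR_lt_neg; rewrite ?ltr0n ?ltr_nat.
Qed.

Lemma natpowR_convex j : (0 < j)%N -> 2 * w j.+1 < w j + w j.+2.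
Proof.
move=> j_gt0.
have pos m : (0 < m)%N -> 0 < w m by move=> ?; rewrite powR_gt0 ?ltr0n.
(* [w] is log-convex since [j * j.+2 < j.+1 * j.+1]; AM-GM then gives convexity. *)
have log_convex : w j.+1 * w j.+1 < w j * w j.+2.
  rewrite -!powRM ?ler0n // -!natrM.
  by apply: powR_lt_neg; rewrite ?ltr0n ?ltr_nat; lia.
have := sqr_ge0 (w j - w j.+2).
have := pos j j_gt0; have := pos j.+1 isT; have := pos j.+2 isT.
nra.
Qed.

End NegativePower.

Section SimpleGraph.
Context {T : finType} (e : rel T).
Hypotheses (e_sym : symmetric e) (e_irr : irreflexive e).

Definition deg_in (A : {set T}) (v : T) : nat := #|[set y in A | e v y]|.

Lemma deg_in_sum (A : {set T}) v : deg_in A v = \sum_(y in A) (e v y : nat).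
Proof.
rewrite /deg_in -sum1_card big_mkcond [RHS]big_mkcond /=.
by apply: eq_bigr => y _; rewrite inE; case: (y \in A); case: (e v y).
Qed.

Lemma deg_in_setD1 {A : {set T}} {x : T} (v : T) :
  x \in A -> deg_in A v = e v x + deg_in (A :\ x) v.
Proof. by move=> xA; rewrite !deg_in_sum (big_setD1 x xA). Qed.

Lemma deg_in_le_card (A : {set T}) v : deg_in A v <= #|A|.
Proof. by apply: subset_leq_card; apply/fintype.subsetP => y; rewrite inE => /andP[]. Qed.

Lemma deg_in_eq_card (A : {set T}) v : deg_in A v = #|A| -> forall y, y \in A -> e v y.
Proof.
move=> full y yA; have sub : [set y in A | e v y] \subset A.
  by apply/fintype.subsetP => z; rewrite inE => /andP[].
by move: yA; rewrite -(subset_cardP full sub) inE => /andP[].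
Qed.

Lemma deg_splitC (V : {set T}) v : deg e v = deg_in V v + deg_in (~: V) v.
Proof.
have -> : deg e v = #|[set y | e v y]| by apply: eq_card => y; rewrite !inE.
by rewrite -(cardsID V); congr (_ + _); apply: eq_card => y; rewrite !inE andbC.
Qed.

Lemma deg_setC1 v : deg e v = deg_in [set~ v] v.
Proof. by apply: eq_card => y; rewrite !inE; case: eqVneq => // ->; rewrite e_irr. Qed.

Lemma deg_lt_card v : (deg e v < #|T|)%N.
Proof.
rewrite deg_setC1 (leq_ltn_trans (deg_in_le_card _ _)) // cardsC1 ltn_predL.
by apply/card_gt0P; exists v.
Qed.

Lemma deg_gt0 v : connected_graph e -> (1 < #|T|)%N -> (0 < deg e v)%N.
Proof.
move=> conn /card_gt1P [a [b [_ _ ab]]].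
have [y yv] : exists y, y != v.
  by case: (eqVneq a v) => [av|]; [exists b; rewrite -av eq_sym | exists a].
case/connectP: (conn v y) => -[/= _ yl|z p /= /andP[evz _] _].
  by rewrite yl eqxx in yv.
by apply/card_gt0P; exists z; rewrite inE.
Qed.

Lemma sum_deg_in_setD1 {A : {set T}} {x : T} : x \in A ->
  \sum_(v in A) deg_in A v = 2 * deg_in A x + \sum_(v in A :\ x) deg_in (A :\ x) v.
Proof.
move=> xA; rewrite (big_setD1 x xA) /=.
under eq_bigr => v _ do rewrite (deg_in_setD1 v xA).
rewrite big_split /=.
have -> : \sum_(v in A :\ x) (e v x : nat) = deg_in A x.
  by rewrite (deg_in_setD1 x xA) e_irr deg_in_sum; apply: eq_bigr => v _; rewrite e_sym.
by rewrite addnA addnn -mul2n.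
Qed.

Lemma acyclicS {A B : {set T}} : A \subset B -> ~ has_cycle e B -> ~ has_cycle e A.
Proof.
move=> AB acyc [s [s_in s_uniq s_size s_cycle]]; apply: acyc.
exists s; split => //; apply/allP => y /(allP s_in); exact: (fintype.subsetP AB).
Qed.

Definition path_in (S : {set T}) (s : seq T) : bool :=
  [&& uniq s, all (mem S) s & sorted e s].

Definition longest_path_in (S : {set T}) (s : seq T) : Prop :=
  path_in S s /\ forall s', path_in S s' -> (size s' <= size s)%N.

Lemma path_in_rev (S : {set T}) s : path_in S s -> path_in S (rev s).
Proof.
case/and3P => s_uniq s_in s_sorted; rewrite /path_in rev_uniq all_rev s_uniq s_in.
by rewrite rev_sorted (eq_sorted (e' := e)) // => a b; rewrite e_sym.
Qed.

Lemma acyclic_no_chord (x0 : T) {S : {set T}} {s : seq T} {i j : nat} :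
  ~ has_cycle e S -> path_in S s -> (i.+1 < j)%N -> (j < size s)%N ->
  ~~ e (nth x0 s i) (nth x0 s j).
Proof.
move=> acyc /and3P[s_uniq s_in s_sorted] ij js; apply/negP => chord; apply: acyc.
(* The chord closes the segment of [s] between positions [i] and [j] into a cycle. *)
pose c := take (j - i).+1 (drop i s).
have c_size : size c = (j - i).+1 by rewrite size_takel // size_drop; lia.
have nth_c t : (t <= j - i)%N -> nth x0 c t = nth x0 s (i + t).
  by move=> ?; rewrite nth_take // nth_drop.
have c_sorted : sorted e c by apply/take_sorted/drop_sorted.
exists c; split.
- by apply/allP => y /mem_take /mem_drop; apply: (allP s_in).
- by rewrite take_uniq // drop_uniq.
- by rewrite c_size; lia.
case: c c_size nth_c c_sorted => [//|y p] [p_size] nth_c /= p_path.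
rewrite rcons_path p_path (last_nth x0) p_size nth_c // subnKC; last by lia.
by have /= -> := nth_c 0 isT; rewrite addn0 e_sym.
Qed.

Lemma acyclic_path_edgeE (x0 : T) {S : {set T}} {s : seq T} {i j : nat} :
  ~ has_cycle e S -> path_in S s -> (i < size s)%N -> (j < size s)%N ->
  e (nth x0 s i) (nth x0 s j) = (i.+1 == j) || (j.+1 == i).
Proof.
move=> acyc s_path i_lt j_lt; have /and3P[_ _ /(sortedP x0) s_sorted] := s_path.
apply/idP/orP => [eij|[]/eqP ij]; last 2 first.
- by rewrite -ij s_sorted // ij.
- by rewrite e_sym -ij s_sorted // ij.
have [ij|] := ltnP i.+1 j.
  by rewrite (negPf (acyclic_no_chord x0 acyc s_path ij j_lt)) in eij.
have [ji|] := ltnP j.+1 i.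
  by rewrite e_sym (negPf (acyclic_no_chord x0 acyc s_path ji i_lt)) in eij.
have ij : i != j by apply: contraTneq eij => ->; rewrite e_irr.
by move: ij; lia.
Qed.

Lemma exists_longest_path_in {S : {set T}} {v : T} : v \in S ->
  exists2 s, longest_path_in S s & (0 < size s)%N.
Proof.
move=> vS; pose has_path l := [exists s : l.-tuple T, path_in S s].
have has_path1 : has_path 1%N.
  by apply/existsP; exists [tuple v]; rewrite /path_in /= vS.
have has_path_le l : has_path l -> (l <= #|T|)%N.
  case/existsP => s /and3P[s_uniq _ _].
  by rewrite -(size_tuple s) -(card_uniqP s_uniq) max_card.
case: (ex_maxnP (ex_intro has_path _ has_path1) has_path_le) => l /existsP[s s_path] l_max.
have s_max s' : path_in S s' -> (size s' <= size s)%N.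
  by move=> s'_path; rewrite size_tuple; apply: l_max; apply/existsP; exists (in_tuple s').
by exists s; [split | apply: (s_max [:: v]); rewrite /path_in /= vS].
Qed.

Lemma longest_path_head_closed (x0 : T) {S : {set T}} {s : seq T} {w : T} :
  longest_path_in S s -> w \in S -> e (nth x0 s 0) w -> w \in s.
Proof.
case=> /and3P[s_uniq s_in s_sorted] s_max wS e0w; apply/negPn/negP => wNs.
have : path_in S (w :: s).
  rewrite /path_in /= wNs s_uniq wS s_in.
  by case: s {s_uniq s_in s_max wNs} s_sorted e0w => //= y p ->; rewrite e_sym => ->.
by move/s_max; rewrite ltnn.
Qed.

Lemma longest_path_last_closed (x0 : T) {S : {set T}} {s : seq T} {w : T} :
  longest_path_in S s -> w \in S -> e (nth x0 s (size s).-1) w -> w \in s.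
Proof.
case=> s_path s_max wS elw; rewrite -mem_rev.
apply: (longest_path_head_closed x0 (s := rev s) _ wS).
  by split=> [|s' /s_max]; rewrite ?path_in_rev // size_rev.
case: s {s_path s_max} elw => [//|y p].
by rewrite nth_rev // subn1.
Qed.

Lemma acyclic_leaf {S : {set T}} : ~ has_cycle e S -> (0 < #|S|)%N ->
  exists2 v, v \in S & (deg_in S v <= 1)%N.
Proof.
move=> acyc /card_gt0P[v0 v0S]; have [s s_longest s_gt0] := exists_longest_path_in v0S.
have [s_path _] := s_longest; have /and3P[_ s_in _] := s_path.
set x := nth v0 s 0; have xS : x \in S by apply: (allP s_in); rewrite mem_nth.
have nbr_at1 y : y \in [set y in S | e x y] -> y = nth v0 s 1.
  rewrite inE => /andP[yS exy].
  have ys := longest_path_head_closed v0 s_longest yS exy.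
  have nth_y := nth_index v0 ys; have y_lt : (index y s < size s)%N by rewrite index_mem.
  suff <- : index y s = 1%N by [].
  apply/eqP; rewrite eqn_leq leqNgt lt0n; apply/andP; split.
    apply/negP => far.
    by have := acyclic_no_chord v0 acyc s_path far y_lt; rewrite nth_y exy.
  by apply: contraTneq exy => y0; rewrite -nth_y y0 e_irr.
exists x => //; rewrite leqNgt; apply/negP => /card_gt1P[a [b [/nbr_at1 -> /nbr_at1 ->]]].
by rewrite eqxx.
Qed.

Lemma acyclic_sum_deg_in (S : {set T}) : ~ has_cycle e S ->
  (\sum_(v in S) deg_in S v <= 2 * #|S|.-1)%N.
Proof.
move cS : #|S| => c; elim: c S cS => [|c IH] S cS acyc.
  by rewrite (cards0_eq cS) big_set0.
have [|x xS x_leaf] := acyclic_leaf acyc; first by rewrite cS.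
have cSx : #|S :\ x| = c by move: cS; rewrite (cardsD1 x S) xS; lia.
have := IH _ cSx (acyclicS (subsetDl S [set x]) acyc).
have := deg_in_le_card (S :\ x) x; have := deg_in_setD1 x xS; rewrite e_irr cSx /=.
by rewrite (sum_deg_in_setD1 xS); move: x_leaf; lia.
Qed.

Lemma longest_path_closed (S : {set T}) s : longest_path_in S s ->
  (forall v, v \in S -> (deg_in S v <= 2)%N) ->
  forall u w, u \in s -> w \in S -> e u w -> w \in s.
Proof.
move=> s_longest deg2 u w us wS euw; apply/negPn/negP => wNs.
(* The ends of [s] are closed by maximality; an interior vertex [u] already has
   its two path neighbours, so a third neighbour [w] would give it degree 3. *)
have [/and3P[s_uniq s_in /(sortedP u) s_sorted] _] := s_longest.
have nth_u := nth_index u us; set i := index u s in nth_u.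
have i_lt : (i < size s)%N by rewrite index_mem.
have i_gt0 : (0 < i)%N.
  rewrite lt0n; apply: contra wNs => /eqP i0.
  by apply: (longest_path_head_closed u s_longest wS); rewrite -i0 nth_u.
have i1_lt : (i.+1 < size s)%N.
  rewrite ltn_neqAle i_lt andbT; apply: contra wNs => /eqP si.
  by apply: (longest_path_last_closed u s_longest wS); rewrite -si /= nth_u.
clearbody i; set a := nth u s i.-1; set b := nth u s i.+1.
have eua : e u a.
  by have := s_sorted i.-1; rewrite prednK // nth_u e_sym => /(_ i_lt).
have eub : e u b by have := s_sorted i i1_lt; rewrite nth_u.
have i_pred_lt : (i.-1 < size s)%N := leq_ltn_trans (leq_pred i) i_lt.
have ab : a != b by rewrite nth_uniq //; lia.
have as_ : a \in s by apply: mem_nth.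
have bs : b \in s by apply: mem_nth.
have wa : w != a by apply: contraNneq wNs => ->.
have wb : w != b by apply: contraNneq wNs => ->.
have aS : a \in S by apply: (allP s_in).
have bS : b \in S by apply: (allP s_in).
have := deg2 u (allP s_in u us); rewrite leqNgt => /negP; apply; apply/card_gt2P.
by exists a, b, w; rewrite !inE aS bS wS eua eub euw ab wa eq_sym wb.
Qed.

Lemma connected_max_deg2_spanning_path {S : {set T}} : (0 < #|S|)%N ->
  (forall x y, x \in S -> y \in S -> connect (Defs.induced e S) x y) ->
  (forall v, v \in S -> (deg_in S v <= 2)%N) ->
  exists2 s, path_in S s & forall y, y \in S -> y \in s.
Proof.
move=> /card_gt0P[v0 v0S] S_conn deg2.
have [s s_longest s_gt0] := exists_longest_path_in v0S.
have [s_path _] := s_longest; have /and3P[_ s_in _] := s_path; exists s => // y yS.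
have s_closed : fingraph.closed (Defs.induced e S) (mem s).
  move=> a b /and3P[aS bS eab]; apply/idP/idP => [as_|bs].
    exact: longest_path_closed s_longest deg2 _ _ as_ bS eab.
  by apply: longest_path_closed s_longest deg2 _ _ bs aS _; rewrite e_sym.
have hS : nth v0 s 0 \in S by apply: (allP s_in); rewrite mem_nth.
by rewrite -(closed_connect s_closed (S_conn _ _ hS yS)) /= mem_nth.
Qed.

Lemma is_tree_on_edge u x : e u x -> is_tree_on e [set u; x].
Proof.
move=> eux; have ux : u != x by apply: contraTneq eux => ->; rewrite e_irr.
split.
- by rewrite cards2 ux.
- move=> a b /set2P[]-> /set2P[]->; try exact: connect0;
    by apply: connect1; rewrite /Defs.induced /= !inE !eqxx ?orbT // e_sym.
- case=> s [s_in s_uniq s_size _].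
  have : (#|s| <= #|[set u; x]|)%N.
    by apply/subset_leq_card/fintype.subsetP => y /(allP s_in).
  by rewrite cards2 ux (card_uniqP s_uniq); move: s_size; lia.
Qed.

Lemma tree_after_removal_card_gt1 (V : {set T}) :
  connected_graph e -> (1 < #|T|)%N -> tree_after_removal e V ->
  (forall W : {set T}, #|W| = #|V|.-1 -> ~ tree_after_removal e W) ->
  (1 < #|~: V|)%N.
Proof.
(* If [~: V = [set u]] and [x] is a neighbour of [u], then removing [V :\ x]
   leaves the edge [ux], a tree, against the minimality of [V]. *)
move=> conn T_gt1 [S_gt0 _ _] minV; rewrite ltn_neqAle S_gt0 andbT eq_sym.
apply/negP => /cards1P[u /(congr1 (fun A : {set T} => ~: A)) Vu].
rewrite finset.setCK in Vu.
have /card_gt0P[x] := deg_gt0 u conn T_gt1; rewrite inE => eux.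
have xV : x \in V by rewrite Vu !inE; apply: contraTneq eux => ->; rewrite e_irr.
apply: (minV (V :\ x)); first by rewrite (cardsD1 x V) xV.
rewrite /tree_after_removal; have -> : ~: (V :\ x) = [set u; x].
  by apply/setP => y; rewrite Vu !inE negb_and !negbK orbC.
exact: is_tree_on_edge eux.
Qed.

End SimpleGraph.

Lemma card_sum_pred (T1 T2 : finType) (P : pred (T1 + T2)) :
  #|P| = (#|[pred a | P (inl a)]| + #|[pred b | P (inr b)]|)%N.
Proof. by rewrite -!sum1_card big_sumType. Qed.

Lemma card_ord_eq m a : #|[pred j : 'I_m | j == a :> nat]| = (a < m)%N.
Proof.
have [am|ma] := ltnP a m; last first.
  by apply: eq_card0 => j; apply/negbTE; apply: contraTneq (ltn_ord j) => ->; rewrite -leqNgt.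
by rewrite (eq_card (B := pred1 (Ordinal am))) ?card1 // => j; rewrite !inE -val_eqE.
Qed.

Section Join.
Context {T1 T2 : finType} (e1 : rel T1) (e2 : rel T2).

Lemma deg_join_inl i : deg (graph_join e1 e2) (inl i) = (deg e1 i + #|T2|)%N.
Proof. by rewrite /deg card_sum_pred; congr addn; apply: eq_cardT. Qed.

Lemma deg_join_inr j : deg (graph_join e1 e2) (inr j) = (#|T1| + deg e2 j)%N.
Proof. by rewrite /deg card_sum_pred; congr addn; apply: eq_cardT. Qed.

End Join.

Lemma deg_complete_graph k (i : 'I_k) : deg (complete_graph k) i = k.-1.
Proof.
rewrite /deg (eq_card (B := predC1 i)) ?cardC1 ?card_ord // => j.
by rewrite !inE eq_sym.
Qed.

Lemma deg_path_graph m (j : 'I_m) : deg (path_graph m) j = ((j.+1 < m) + (0 < j))%N.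
Proof.
rewrite /deg -(card_ord_eq m j.+1).
have -> : ((0 < j)%N : nat) = #|[pred i : 'I_m | i.+1 == j :> nat]|.
  case: j => -[|j] j_lt /=; apply: esym; first by apply: eq_card0 => i; rewrite !inE.
  rewrite (eq_card (B := [pred i : 'I_m | i == j :> nat])) ?card_ord_eq ?(ltnW j_lt) //.
rewrite -cardUI [X in (_ + X)%N]eq_card0 ?addn0; last first.
  by move=> i; rewrite !inE; apply/negbTE/andP => -[/eqP ? /eqP ?]; lia.
by apply: eq_card => i; rewrite !inE /path_graph eq_sym.
Qed.

Lemma isomorphic_inv {T1 T2 : finType} {e1 : rel T1} {e2 : rel T2} (g : T2 -> T1) :
  bijective g -> (forall a b, e1 (g a) (g b) = e2 a b) -> isomorphic e1 e2.
Proof.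
case=> f gK fK g_edge; exists f; split; first by exists g.
by move=> x y; rewrite -g_edge !fK.
Qed.

Lemma deg_isomorphic {T1 T2 : finType} {e1 : rel T1} {e2 : rel T2} {f : T1 -> T2} :
  bijective f -> (forall x y, e1 x y = e2 (f x) (f y)) ->
  forall x, deg e1 x = deg e2 (f x).
Proof.
move=> f_bij f_edge x; have [g _ gK] := f_bij.
rewrite /deg -(fintype.card_image (bij_inj f_bij)); apply: eq_card => z.
by rewrite -[z]gK fintype.mem_image ?inE ?f_edge //; exact: bij_inj.
Qed.

Section RandicIndex.
Local Open Scope ring_scope.
Context {R : realType} (alpha : R).

Lemma randic0_isomorphic {T1 T2 : finType} {e1 : rel T1} {e2 : rel T2} :
  isomorphic e1 e2 -> randic0 e1 alpha = randic0 e2 alpha.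
Proof.
case=> f [f_bij f_edge]; rewrite /randic0 (reindex f) /=; last exact: onW_bij.
by apply: eq_bigr => x _; rewrite (deg_isomorphic f_bij f_edge).
Qed.

Lemma randic0_bigID {T : finType} (e : rel T) (V : {set T}) :
  randic0 e alpha =
  \sum_(v in V) (deg e v)%:R `^ alpha + \sum_(v in ~: V) (deg e v)%:R `^ alpha.
Proof.
rewrite /randic0 (bigID (mem V)) /=.
by congr (_ + _); apply: eq_bigl => v; rewrite !inE.
Qed.

Lemma randic0_join_complete_path k m : (1 < m)%N ->
  randic0 (graph_join (complete_graph k) (path_graph m)) alpha =
  k%:R * (k.-1 + m)%:R `^ alpha + 2 * (k + 1)%:R `^ alpha
  + (m - 2)%:R * (k + 2)%:R `^ alpha.
Proof.
case: m => [|[|m]] // _; rewrite /randic0 big_sumType /=.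
under eq_bigr => i _ do rewrite deg_join_inl deg_complete_graph card_ord.
under [X in _ + X]eq_bigr => j _ do rewrite deg_join_inr deg_path_graph card_ord.
rewrite sumr_const card_ord -addrA; congr (_ + _); first by rewrite mulr_natl.
rewrite big_ord_recl big_ord_recr /=.
under eq_bigr => i _ do rewrite /bump /= !ltnS ltn_ord.
by rewrite sumr_const card_ord !subSS subn0 /bump /= add1n ltnn add0n; ring.
Qed.

End RandicIndex.

Lemma join_complete_path_isomorphic {T : finType} {e : rel T} {V : {set T}}
    {s : seq T} (x0 : T) :
  symmetric e -> irreflexive e -> (forall v y, v \in V -> y != v -> e v y) ->
  uniq s -> (forall y, (y \in s) = (y \notin V)) ->
  (forall i j, (i < size s)%N -> (j < size s)%N ->
     e (nth x0 s i) (nth x0 s j) = (i.+1 == j) || (j.+1 == i)) ->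
  isomorphic e (graph_join (complete_graph #|V|) (path_graph (size s))).
Proof.
move=> e_sym e_irr V_adj s_uniq s_compl s_edge.
pose g (z : 'I_#|V| + 'I_(size s)) :=
  match z with inl i => enum_val (A := V) i | inr j => nth x0 s j end.
have gV i : enum_val (A := V) i \in V := enum_valP i.
have gNV (j : 'I_(size s)) : nth x0 s j \notin V by rewrite -s_compl mem_nth.
have V_adjN i j : e (g (inl i)) (g (inr j)).
  by apply: V_adj (gV i) _; apply: contraNneq (gNV j) => /= ->.
apply: (isomorphic_inv g).
  apply: inj_card_bij.
    case=> [i|j] [i'|j'] /= eq_g.
    - by congr inl; apply: enum_val_inj.
    - by move: (gNV j'); rewrite -eq_g gV.
    - by move: (gNV j); rewrite eq_g gV.
    - congr inr; apply/val_inj/eqP.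
      by rewrite -(nth_uniq x0 (ltn_ord j) (ltn_ord j') s_uniq) eq_g.
  rewrite card_sum !card_ord -(card_uniqP s_uniq) -(cardsC V) leq_add2l.
  by apply/subset_leq_card/fintype.subsetP => y; rewrite inE -s_compl.
case=> [i|j] [i'|j'].
- rewrite /= /complete_graph; case: eqVneq => [->|ii']; first by rewrite e_irr.
  by apply: V_adj (gV i) _; rewrite (inj_eq enum_val_inj) eq_sym.
- exact: V_adjN.
- by rewrite e_sym V_adjN.
- exact: s_edge.
Qed.

Section QuasiTree.
Local Open Scope ring_scope.
Context {R : realType} (alpha : R) {T : finType} (e : rel T) (V : {set T}) (n k : nat).
Hypotheses (alpha_lt0 : alpha < 0) (e_sym : symmetric e) (e_irr : irreflexive e).
Hypotheses (e_conn : connected_graph e) (T_card : #|T| = n) (n_gt1 : (1 < n)%N).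
Hypotheses (V_card : #|V| = k) (k_gt0 : (0 < k)%N) (V_tree : tree_after_removal e V).
Hypothesis V_min : forall W : {set T}, #|W| = k.-1 -> ~ tree_after_removal e W.

Local Notation w d := ((d : nat)%:R `^ alpha).
Local Notation d v := (deg_in e (~: V) v).
Local Notation bound := (k%:R * w (n - 1) + 2 * w (k + 1) + (n - k - 2)%:R * w (k + 2)).
Let u j := w (k + j).

Let deg_pos v : (0 < deg e v)%N.
Proof. by apply: deg_gt0 e_conn _; rewrite T_card. Qed.

Lemma card_tree_part : #|~: V| = (n - k)%N.
Proof. by rewrite -T_card -(cardsC V) V_card addKn. Qed.

Lemma card_tree_part_gt1 : (1 < n - k)%N.
Proof.
rewrite -card_tree_part; apply: tree_after_removal_card_gt1 e_sym e_irr _ e_conn _ V_tree _.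
  by rewrite T_card.
by rewrite V_card.
Qed.

Lemma quasi_part_leif :
  k%:R * w (n - 1) <= \sum_(v in V) w (deg e v)
  ?= iff [forall (v | v \in V), deg e v == (n - 1)%N].
Proof.
rewrite -V_card mulr_natl -sumr_const; apply: leif_sum => v _.
apply: natpowR_leif alpha_lt0 _ _ (deg_pos v) _.
by rewrite subn1 -ltnS (ltn_predK n_gt1) -T_card deg_lt_card.
Qed.

Lemma u_convex j : 2 * u j.+1 < u j + u j.+2.
Proof. by rewrite /u !addnS; apply: (natpowR_convex alpha_lt0); rewrite addn_gt0 k_gt0. Qed.

Lemma tree_vertex_leif v :
  u 1 + ((d v)%:R - 1) * (u 2 - u 1) <= w (deg e v)
  ?= iff ((d v == 1) || (d v == 2)) && (deg e v == k + d v)%N.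
Proof.
apply: leif_trans (convex_secant_leif u_convex (d v)) _.
apply: natpowR_leif alpha_lt0 _ _ (deg_pos v) _.
by rewrite (deg_splitC e V) -V_card leq_add2r deg_in_le_card.
Qed.

Lemma tree_part_leif (D := (\sum_(v in ~: V) d v)%N) :
  2 * w (k + 1) + (n - k - 2)%:R * w (k + 2) <= \sum_(v in ~: V) w (deg e v)
  ?= iff (D == 2 * (n - k).-1)%N
         && [forall (v | v \in ~: V), ((d v == 1) || (d v == 2)) && (deg e v == k + d v)%N].
Proof.
(* The secant bounds sum to [m * u 1 + (D - m) * (u 2 - u 1)] with [m = n - k];
   conclude with [D <= 2 * (m - 1)] and [u 2 < u 1]. *)
apply: leif_trans (leif_sum (fun v _ => tree_vertex_leif v)).
have [_ _ S_acyclic] := V_tree.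
have D_le : (D <= 2 * (n - k).-1)%N by rewrite -card_tree_part acyclic_sum_deg_in.
have u2_lt_u1 : u 2 < u 1.
  by apply: powR_lt_neg; rewrite ?ltr0n ?ltr_nat ?addn_gt0 ?k_gt0 // ltn_add2l.
have sum_d : \sum_(v in ~: V) (d v)%:R = D%:R :> R by rewrite natr_sum.
rewrite big_split /= -mulr_suml sumrB sum_d sumr_const sumr_const card_tree_part.
have := card_tree_part_gt1; move: D_le; case: (n - k)%N => [|[|m]] // D_le _.
rewrite -[u 1 *+ _]mulr_natl !subSS subn0 -/(u 1) -/(u 2); apply/leifP.
case: eqVneq => [-> | D_neq]; first by apply/eqP; rewrite natrM !mulrS; ring.
have : (D.+1 <= 2 * m.+1)%N by rewrite ltn_neqAle D_neq D_le.
rewrite -(ler_nat R) natrM !mulrS.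
nra.
Qed.

Lemma randic0_quasi_tree_leif :
  bound <= randic0 e alpha
  ?= iff [forall (v | v \in V), deg e v == (n - 1)%N]
         && ((\sum_(v in ~: V) d v == 2 * (n - k).-1)%N
         && [forall (v | v \in ~: V), ((d v == 1) || (d v == 2)) && (deg e v == k + d v)%N]).
Proof.
rewrite (randic0_bigID alpha e V) -addrA.
by apply: leifD; [apply: quasi_part_leif | apply: tree_part_leif].
Qed.

Lemma quasi_tree_extremal_isomorphic :
  [forall (v | v \in V), deg e v == (n - 1)%N] ->
  [forall (v | v \in ~: V), ((d v == 1) || (d v == 2)) && (deg e v == k + d v)%N] ->
  isomorphic e (graph_join (complete_graph k) (path_graph (n - k))).
Proof.
move=> /forall_inP V_full /forall_inP S_deg.
have V_adj v y : v \in V -> y != v -> e v y.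
  move=> /V_full/eqP deg_v yv.
  apply: (deg_in_eq_card e [set~ v] v); last by rewrite !inE.
  by rewrite -deg_setC1 // deg_v cardsC1 T_card subn1.
have deg2 v : v \in ~: V -> (d v <= 2)%N by move=> /S_deg/andP[/orP[]/eqP-> _].
have [S_gt0 S_conn S_acyclic] := V_tree.
have [s s_path s_span] := connected_max_deg2_spanning_path e e_sym S_gt0 S_conn deg2.
have /and3P[s_uniq s_in _] := s_path.
have s_compl y : (y \in s) = (y \notin V).
  by apply/idP/idP => [/(allP s_in)|yNV]; rewrite ?inE //; apply: s_span; rewrite inE.
have s_size : size s = (n - k)%N.
  rewrite -card_tree_part -(card_uniqP s_uniq).
  by apply: eq_card => y; rewrite s_compl inE.
have [x0 _] := card_gt0P S_gt0.
rewrite -s_size -V_card.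
apply: (join_complete_path_isomorphic x0 e_sym e_irr V_adj s_uniq s_compl).
by move=> i j; apply: (acyclic_path_edgeE e e_sym e_irr x0 S_acyclic s_path).
Qed.

Lemma randic0_extremal :
  isomorphic e (graph_join (complete_graph k) (path_graph (n - k))) ->
  randic0 e alpha = bound.
Proof.
move=> iso; rewrite (randic0_isomorphic alpha iso).
rewrite randic0_join_complete_path ?card_tree_part_gt1 //.
by have -> : (k.-1 + (n - k) = n - 1)%N by have := card_tree_part_gt1; lia.
Qed.

Lemma randic0_quasi_tree_bound :
  bound <= randic0 e alpha /\
  (randic0 e alpha = bound <->
     isomorphic e (graph_join (complete_graph k) (path_graph (n - k)))).
Proof.
have [bound_le bound_eq] := randic0_quasi_tree_leif.
split=> //; split=> [/esym/eqP | /randic0_extremal //].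
by rewrite bound_eq => /and3P[V_full _ S_deg]; apply: quasi_tree_extremal_isomorphic.
Qed.

End QuasiTree.

Theorem mainTheorem1 (R : realType) (k n : nat) (alpha : R)
    (G : rel 'I_n) :
  (1 <= k)%N -> (3 <= n)%N -> (alpha < 0)%R ->
  simple_graph G -> gen_quasi_tree G k ->
  let bound : R :=
    (k%:R * ((n - 1)%N%:R `^ alpha) + 2%:R * ((k + 1)%N%:R `^ alpha)
     + (n - k - 2)%N%:R * ((k + 2)%N%:R `^ alpha))%R in
  (bound <= randic0 G alpha)%R /\
  (randic0 G alpha = bound <->
     isomorphic G (graph_join (complete_graph k) (path_graph (n - k)))).
Proof.
move=> k_gt0 n_ge3 alpha_lt0 [G_sym G_irr] [G_conn [[V [V_card V_tree]] V_min]].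
have n_gt1 : (1 < n)%N by apply: leq_trans n_ge3.
exact: (randic0_quasi_tree_bound alpha G V n k alpha_lt0 G_sym G_irr G_conn (card_ord n)
  n_gt1 V_card k_gt0 V_tree V_min).
Qed.
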